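(* Let $n\ge 2$, $l\in\{1,\dots,n\}$ and $m=l(n-1)$. Among all simple directed graphs with $n$ vertices and $m$ arcs, the maximal algebraic connectivity is $l$, and it is achieved by any graph that is the union of $l$ simple $n$-vertex directed stars rooted at $l$ distinct vertices.
   Context: A simple directed graph has no self-arcs and no repeated arcs; an arc $(j,i)$ goes from $j$ to $i$. The (in-degree) Laplacian of $\mathbb G$ on vertices $\{1,\dots,n\}$ is $L(\mathbb G)=D-A$, $D$ the diagonal matrix of in-degrees, $A_{ij}=1$ if $(j,i)$ is an arc and $0$ otherwise. The algebraic connectivity is the second smallest real part among the $n$ eigenvalues of $L(\mathbb G)$ counted with algebraic multiplicity. The $n$-vertex directed star rooted at vertex $r$ is the graph on $\{1,\dots,n\}$ whose arcs are $(r,j)$ for all $j\ne r$. The union of graphs on the same vertex set is the graph on that vertex set whose arc set is the union of their arc sets. *)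

From mathcomp Require Import all_boot all_order all_algebra all_field.
Set Implicit Arguments. Unset Strict Implicit. Unset Printing Implicit Defensive.
Import Order.TTheory GRing.Theory Num.Theory.
Local Open Scope ring_scope.

(* A directed graph on the vertex set 'I_n is given by its arc set:
   (j, i) \in E means there is an arc from j to i. *)
Definition digraph (n : nat) := {set 'I_n * 'I_n}.

(* simple: no self-arcs (repeated arcs are impossible for a set of arcs) *)
Definition simple_digraph n (E : digraph n) : bool :=
  [forall j : 'I_n, (j, j) \notin E].

Definition indeg n (E : digraph n) (i : 'I_n) : nat :=
  #|[set j : 'I_n | (j, i) \in E]|.

Definition laplacian n (E : digraph n) : 'M[algC]_n :=
  \matrix_(i, j) ((if i == j then (indeg E i)%:R else 0)
                  - (if (j, i) \in E then 1 else 0)).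

(* eigenvalues with algebraic multiplicity: the roots of the characteristic
   polynomial (a monic polynomial over the algebraically closed field algC) *)
Definition eigenvalues n (M : 'M[algC]_n) : seq algC :=
  sval (closed_field_poly_normal (char_poly M)).

Definition alg_connectivity n (E : digraph n) : algC :=
  nth 0 (sort <=%R (map (fun z => 'Re z) (eigenvalues (laplacian E)))) 1.

Definition dstar n (r : 'I_n) : digraph n :=
  [set p | (p.1 == r) && (p.2 != r)].

Definition star_union n (S : {set 'I_n}) : digraph n :=
  \bigcup_(r in S) dstar r.

From mathcomp Require Import all_boot all_order all_algebra all_field.
Set Implicit Arguments. Unset Strict Implicit. Unset Printing Implicit Defensive.
Import Order.TTheory GRing.Theory Num.Theory.
Local Open Scope ring_scope.

(* The eigenvalues of a Laplacian sum to its trace, which for a simple digraph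
   is its number m of arcs, and 0 is an eigenvalue because the rows of L sum
   to zero.  Among the sorted real parts, either the second one is at most 0,
   or 0 is the smallest and the n - 1 others, each at least the second, sum
   to m; so the second is at most m / (n - 1).
   For the union of the stars rooted at the l vertices of S, L = l I - 1 chi_S^T
   is a rank-one perturbation of l I: its eigenvalues lie in {0, l}, and the
   trace l (n - 1) forces 0 to be simple, so the second one is l. *)

Section Eigenvalues.
Variables (n : nat) (A : 'M[algC]_n).

Lemma char_poly_eigenvalues :
  char_poly A = \prod_(z <- eigenvalues A) ('X - z%:P).
Proof.
rewrite /eigenvalues; case: closed_field_poly_normal => s /= {1}->.
by rewrite (monicP (char_poly_monic A)) scale1r.
Qed.

Lemma size_eigenvalues : size (eigenvalues A) = n.
Proof.
by have := size_char_poly A; rewrite char_poly_eigenvalues size_prod_XsubC => -[].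
Qed.

Lemma sum_eigenvalues : (0 < n)%N -> \sum_(z <- eigenvalues A) z = \tr A.
Proof.
move=> n_gt0; apply: oppr_inj; rewrite -char_poly_trace // char_poly_eigenvalues.
by rewrite -coefPn_prod_XsubC size_eigenvalues // -lt0n.
Qed.

Lemma mem_eigenvalues z : (z \in eigenvalues A) = eigenvalue A z.
Proof. by rewrite eigenvalue_root_char char_poly_eigenvalues root_prod_XsubC. Qed.

Lemma det_eq0_mem_eigenvalues : \det A = 0 -> 0 \in eigenvalues A.
Proof.
move=> detA0; rewrite -root_prod_XsubC -char_poly_eigenvalues /root horner_coef0.
by rewrite char_poly_det detA0 mulr0.
Qed.

End Eigenvalues.

Section Laplacian.
Variables (n : nat) (E : digraph n).

Lemma sum_indeg : (\sum_i indeg E i)%N = #|E|.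
Proof.
rewrite /indeg; under eq_bigr do rewrite -sum1dep_card.
rewrite (exchange_big_dep predT) //= pair_big_dep /= -sum1_card.
by apply: eq_bigl => -[].
Qed.

Lemma laplacian_mul_ones : laplacian E *m const_mx 1 = 0 :> 'cV_n.
Proof.
apply/colP => i; rewrite !mxE; under eq_bigr do rewrite !mxE mulr1.
rewrite sumrB (bigD1 i) //= eqxx big1 => [|j /negbTE]; last first.
  by rewrite eq_sym => ->.
by rewrite addr0 /indeg -sum1dep_card natr_sum big_mkcond subrr.
Qed.

Lemma det_laplacian : (0 < n)%N -> \det (laplacian E) = 0.
Proof.
move=> n_gt0; rewrite -det_tr; apply/eqP/det0P; exists (const_mx 1).
  by apply/rV0Pn; exists (Ordinal n_gt0); rewrite mxE oner_neq0.
by rewrite -[const_mx 1]trmxK -trmx_mul trmx_const laplacian_mul_ones trmx0.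
Qed.

Lemma trace_laplacian : simple_digraph E -> \tr (laplacian E) = #|E|%:R.
Proof.
move=> /forallP loopless; rewrite /mxtrace -sum_indeg natr_sum.
by apply: eq_bigr => i _; rewrite mxE eqxx (negbTE (loopless i)) subr0.
Qed.

End Laplacian.

Section SortedSums.
Variable R : numDomainType.

Lemma mulrn_le_sum (b : R) (w : seq R) :
  {in w, forall x, b <= x} -> b *+ size w <= \sum_(x <- w) x.
Proof.
elim: w => [|x w IHw] bw; first by rewrite big_nil.
rewrite big_cons mulrS lerD ?bw ?mem_head // IHw // => y yw.
by apply: bw; rewrite inE yw orbT.
Qed.

Lemma sum_le_mulrn (c : R) (w : seq R) :
  {in w, forall x, x <= c} -> \sum_(x <- w) x <= c *+ size w.
Proof.
move=> wc; have := @mulrn_le_sum (- c) (map -%R w).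
rewrite size_map big_map sumrN mulNrn lerN2; apply=> _ /mapP[x xw ->].
by rewrite lerN2 wc.
Qed.

Lemma sorted_nth1_mulrn_le_sum (u : seq R) :
  sorted <=%R u -> 0 \in u -> 0 <= \sum_(x <- u) x ->
  u`_1 *+ (size u).-1 <= \sum_(x <- u) x.
Proof.
case: u => [|a [|b w]] //= /andP[_ sorted_bw] u0 sum_ge0.
have b_min : {in b :: w, forall x, b <= x}.
  move=> x; rewrite inE => /predU1P[-> //|].
  exact: (allP (order_path_min le_trans sorted_bw)).
have [/b_min b_le0 | b0w] := boolP (0 \in b :: w).
  exact: le_trans (mulrn_wle0 _ b_le0) sum_ge0.
have a0 : a = 0 by move: u0; rewrite inE (negbTE b0w) orbF => /eqP.
by rewrite big_cons a0 add0r (mulrn_le_sum b_min).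
Qed.

Lemma sorted_nth1_eq (c : R) (u : seq R) : 0 < c ->
  sorted <=%R u -> {in u, forall x, x = 0 \/ x = c} -> (1 < size u)%N ->
  \sum_(x <- u) x = c *+ (size u).-1 -> u`_1 = c.
Proof.
move=> c_gt0; case: u => [|a [|b w]] //= /andP[ab _] u0c _.
have [b0|-> //] : b = 0 \/ b = c by apply: u0c; rewrite !inE eqxx orbT.
have a0 : a = 0.
  have [//|ac] := u0c a (mem_head _ _).
  by move: ab; rewrite ac b0 => /(lt_le_trans c_gt0); rewrite ltxx.
rewrite !big_cons a0 b0 !add0r => sum_w.
have : c *+ (size w).+1 <= c *+ size w.
  rewrite -sum_w sum_le_mulrn // => x xw.
  have [->|->] : x = 0 \/ x = c by apply: u0c; rewrite !inE xw !orbT.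
  - exact: ltW.
  - exact: lexx.
by rewrite ler_pMn2l // ltnn.
Qed.

End SortedSums.

Definition Re_spectrum n (E : digraph n) : seq algC :=
  sort <=%R (map (fun z => 'Re z) (eigenvalues (laplacian E))).

Section ReSpectrum.
Variables (n : nat) (E : digraph n).

Lemma alg_connectivityE : alg_connectivity E = (Re_spectrum E)`_1.
Proof. by []. Qed.

Lemma sorted_Re_spectrum : sorted <=%R (Re_spectrum E).
Proof.
apply: (@sort_sorted_in _ Num.real) => [x y xR yR|]; first exact: real_leVge.
by apply/allP => _ /mapP[z _ ->]; apply: Creal_Re.
Qed.

Lemma size_Re_spectrum : size (Re_spectrum E) = n.
Proof. by rewrite size_sort size_map size_eigenvalues. Qed.

Lemma Re_spectrumP x :
  x \in Re_spectrum E -> exists2 z, eigenvalue (laplacian E) z & x = 'Re z.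
Proof. by rewrite mem_sort => /mapP[z]; rewrite mem_eigenvalues; exists z. Qed.

Lemma mem0_Re_spectrum : (0 < n)%N -> 0 \in Re_spectrum E.
Proof.
move=> n_gt0; rewrite mem_sort; apply/mapP; exists 0; last by rewrite raddf0.
exact/det_eq0_mem_eigenvalues/det_laplacian.
Qed.

Lemma sum_Re_spectrum : simple_digraph E -> (0 < n)%N ->
  \sum_(x <- Re_spectrum E) x = #|E|%:R.
Proof.
move=> simpleE n_gt0; rewrite (perm_big _ (permEl (perm_sort _ _))) big_map.
rewrite -raddf_sum sum_eigenvalues // trace_laplacian //.
exact/Creal_ReP/realn.
Qed.

Lemma alg_connectivity_mulrn_le : simple_digraph E -> (0 < n)%N ->
  alg_connectivity E *+ n.-1 <= #|E|%:R.
Proof.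
move=> simpleE n_gt0; rewrite alg_connectivityE -(sum_Re_spectrum simpleE n_gt0).
rewrite -[X in _ *+ X.-1]size_Re_spectrum sorted_nth1_mulrn_le_sum //.
- exact: sorted_Re_spectrum.
- exact: mem0_Re_spectrum.
- by rewrite sum_Re_spectrum // ler0n.
Qed.

End ReSpectrum.

Lemma sum_indicator_card (T : finType) (A : {pred T}) :
  (\sum_(i : T) (i \in A))%N = #|A|.
Proof.
by rewrite -sum1_card [RHS]big_mkcond; apply: eq_bigr => i _; case: (i \in A).
Qed.

Section StarUnion.
Variables (n : nat) (S : {set 'I_n}).

Lemma mem_star_union p : (p \in star_union S) = (p.1 \in S) && (p.2 != p.1).
Proof.
apply/bigcupP/andP => [[r rS]|[p1S p21]].
  by rewrite inE => /andP[/eqP-> ->].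
by exists p.1; rewrite // inE eqxx.
Qed.

Lemma star_union_simple : simple_digraph (star_union S).
Proof. by apply/forallP => j; rewrite mem_star_union eqxx andbF. Qed.

Lemma indeg_star_union i : indeg (star_union S) i = #|S :\ i|.
Proof.
by apply: eq_card => j; rewrite !inE mem_star_union /= andbC eq_sym.
Qed.

Lemma card_star_union : #|star_union S| = (#|S| * n.-1)%N.
Proof.
have indegD i : (indeg (star_union S) i + (i \in S))%N = #|S|.
  by rewrite indeg_star_union [RHS](cardsD1 i) addnC.
have : (#|star_union S| + #|S|)%N = (#|S| * n)%N.
  rewrite -sum_indeg -{1}sum_indicator_card -big_split /=.
  by rewrite (eq_bigr _ (fun i _ => indegD i)) sum_nat_const card_ord mulnC.
by move/(congr1 (subn^~ #|S|)); rewrite addnK -subn1 mulnBr muln1.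
Qed.

Lemma laplacian_star_unionE i j :
  laplacian (star_union S) i j = (i == j)%:R * #|S|%:R - (j \in S)%:R.
Proof.
rewrite mxE mem_star_union /= indeg_star_union.
have [<-|ij] := eqVneq i j; last by rewrite andbT mul0r; case: (j \in S).
by rewrite andbF subr0 mul1r [in RHS](cardsD1 i S) natrD addrC addKr.
Qed.

Lemma eigenvalue_laplacian_star_union z :
  eigenvalue (laplacian (star_union S)) z -> z = 0 \/ z = #|S|%:R.
Proof.
case/eigenvalueP => v vL /rV0Pn[k vk_neq0].
set l : algC := #|S|%:R; set s := \sum_i v 0 i.
have vLE j : z * v 0 j = l * v 0 j - (j \in S)%:R * s.
  have := congr1 (fun w : 'rV_n => w 0 j) vL; rewrite !mxE => <-.
  under eq_bigr do rewrite laplacian_star_unionE mulrBr.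
  rewrite sumrB (bigD1 j) //= big1 => [|i /negbTE ij]; last first.
    by rewrite ij mul0r mulr0.
  by rewrite eqxx mul1r addr0 -mulr_suml mulrC [s * _]mulrC.
have sum_indicator : \sum_j (j \in S)%:R = l.
  by rewrite -natr_sum sum_indicator_card.
have zs0 : z * s = 0.
  rewrite mulr_sumr (eq_bigr _ (fun j _ => vLE j)) sumrB -mulr_sumr -mulr_suml.
  by rewrite sum_indicator subrr.
move/eqP: zs0; rewrite mulf_eq0 => /orP[/eqP z0|/eqP s0]; [by left|right].
by apply: (mulIf vk_neq0); rewrite vLE s0 mulr0 subr0.
Qed.

Lemma alg_connectivity_star_union : (1 < n)%N -> (0 < #|S|)%N ->
  alg_connectivity (star_union S) = #|S|%:R.
Proof.
move=> n_gt1 S_gt0; have n_gt0 := ltnW n_gt1.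
rewrite alg_connectivityE; apply: sorted_nth1_eq.
- by rewrite ltr0n.
- exact: sorted_Re_spectrum.
- move=> _ /Re_spectrumP[z /eigenvalue_laplacian_star_union[]-> ->].
    by left; rewrite raddf0.
  by right; apply/Creal_ReP/realn.
- by rewrite size_Re_spectrum.
rewrite sum_Re_spectrum ?star_union_simple // card_star_union size_Re_spectrum.
by rewrite natrM mulr_natr.
Qed.

End StarUnion.

Theorem theorem3 (n l : nat) (hn : (2 <= n)%N) (hl1 : (1 <= l)%N) (hln : (l <= n)%N) :
  (forall E : digraph n, simple_digraph E -> #|E| = (l * (n - 1))%N ->
     alg_connectivity E <= l%:R)
  /\ (exists E : digraph n, [/\ simple_digraph E, #|E| = (l * (n - 1))%N &
        alg_connectivity E = l%:R])
  /\ (forall S : {set 'I_n}, #|S| = l ->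
        [/\ simple_digraph (star_union S), #|star_union S| = (l * (n - 1))%N &
            alg_connectivity (star_union S) = l%:R]).
Proof.
have stars (S : {set 'I_n}) : #|S| = l ->
    [/\ simple_digraph (star_union S), #|star_union S| = (l * (n - 1))%N &
        alg_connectivity (star_union S) = l%:R].
  move=> cardS; rewrite subn1 card_star_union.
  rewrite alg_connectivity_star_union ?cardS //.
  by split=> //; apply: star_union_simple.
split=> [E simpleE cardE|].
  have := alg_connectivity_mulrn_le simpleE (ltnW hn).
  by rewrite cardE natrM mulr_natr subn1 ler_pMn2r // -subn1 subn_gt0.
split; last exact: stars.
pose S := [set widen_ord hln i | i : 'I_l].
have cardS : #|S| = l.
  by rewrite card_imset ?card_ord // => i j [] /val_inj.
by exists (star_union S); apply: stars.
Qed.
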